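(* Let $\vec{G}$ be a DDMOG of order $n$ with DDM labeling $g$, its vertices indexed $v_1,\dots,v_n$ so that $g(v_i)=i$. Then for every integer $\ell$ with $1\le\ell\le n/2$ there exists a labeling $h$ of $\ell\vec{C_4}$ (taken vertex-disjoint from $\vec{G}$) for which the weighted sum $\vec{G}\oplus_{wt_h}^0\ell\vec{C_4}$ is defined and is a DDMOG.
   Context: An oriented graph is a finite digraph without loops such that whenever $(u,v)$ is an arc, $(v,u)$ is not. For a vertex $v$, $N^+(v)=\{x:(x,v)\text{ is an arc}\}$, $N^-(v)=\{x:(v,x)\text{ is an arc}\}$; for a labeling $f$, $wt_f(v)=\sum_{x\in N^+(v)}f(x)-\sum_{x\in N^-(v)}f(x)$. A DDM labeling of an oriented graph on $n$ vertices is a bijection $f:V\to\{1,\dots,n\}$ with $wt_f(v)=0$ for all $v$; a DDMOG is an oriented graph admitting one. $\ell\vec{C_4}$ denotes the oriented graph consisting of $\ell$ vertex-disjoint directed 4-cycles, the $i$-th having vertices $v_{i1},v_{i2},v_{i3},v_{i4}$ and arcs $(v_{i1},v_{i2}),(v_{i2},v_{i3}),(v_{i3},v_{i4}),(v_{i4},v_{i1})$. For an oriented graph $\vec{H}$ with labeling $h$ and integer $j$, $V_h^{j}(\vec{H})=\{u:wt_h(u)=j\}$. Weighted sum: let $\vec{G}$ have vertices $v_1,\dots,v_n$ (indexed by a labeling $g$ with $g(v_i)=i$), $s\in\mathbb{Z}$, and $\vec{H}$ (vertex-disjoint from $\vec{G}$) have a labeling $h:V(\vec{H})\to\mathbb{Z}^+$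 with $\{|wt_h(u)|:u\in V(\vec{H})\}\subseteq\{0\}\cup\{i+s:1\le i\le n\}$; then $\vec{G}\oplus_{wt_h}^s\vec{H}$ has vertex set $V(\vec{G})\cup V(\vec{H})$ and arc set $E(\vec{G})\cup E(\vec{H})\cup\bigcup_{i=1}^n(E^i\cup E^{-i})$, where $E^i=\{(v_i,u):u\in V_h^{-i-s}(\vec{H})\}$ and $E^{-i}=\{(u,v_i):u\in V_h^{i+s}(\vec{H})\}$. *)

From mathcomp Require Import all_boot all_order all_algebra.
Set Implicit Arguments. Unset Strict Implicit. Unset Printing Implicit Defensive.
Import Order.TTheory GRing.Theory Num.Theory.
Local Open Scope ring_scope.

(* An oriented graph on a finite vertex type: arc relation E, no loops, no 2-cycles.
   (E u v -> ~~ E v u also excludes loops.) *)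
Definition oriented (V : finType) (E : rel V) : Prop :=
  forall u v, E u v -> ~~ E v u.

Definition wt (V : finType) (E : rel V) (f : V -> nat) (v : V) : int :=
  \sum_(x : V | E x v) (f x)%:Z - \sum_(x : V | E v x) (f x)%:Z.

Definition DDM_labeling (V : finType) (E : rel V) (f : V -> nat) : Prop :=
  [/\ forall v, (1 <= f v <= #|V|)%N, injective f & forall v, wt E f v = 0].

Definition DDMOG (V : finType) (E : rel V) : Prop :=
  oriented E /\ exists f : V -> nat, DDM_labeling E f.

(* l vertex-disjoint directed 4-cycles: vertex (i,j) is v_{i,j+1},
   arcs (i,j) -> (i, j+1 mod 4). *)
Definition lC4 (l : nat) : rel ('I_l * 'I_4) :=
  fun a b => (a.1 == b.1) && (val b.2 == (val a.2).+1 %% 4)%N.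

Definition wsum_defined (W : finType) (n : nat) (s : int) (F : rel W)
    (h : W -> nat) : Prop :=
  forall u, `|wt F h u| = 0 \/ exists i : nat, (1 <= i <= n)%N /\ `|wt F h u| = i%:Z + s.

(* The weighted sum G (+)^s_{wt_h} H on V(G) + V(H); the vertex v of G is v_i
   with i = g v.  E^i = {(v_i,u) : wt_h(u) = -i-s}, E^{-i} = {(u,v_i) : wt_h(u) = i+s}. *)
Definition wsum (V W : finType) (E : rel V) (g : V -> nat) (s : int)
    (F : rel W) (h : W -> nat) : rel (V + W) :=
  fun x y =>
    match x, y with
    | inl a, inl b => E a b
    | inr a, inr b => F a b
    | inl v, inr u => wt F h u == - ((g v)%:Z + s)
    | inr u, inl v => wt F h u == (g v)%:Z + s
    end.

From mathcomp Require Import all_boot all_order all_algebra.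
From mathcomp Require Import zify.
Import Order.TTheory GRing.Theory Num.Theory.
Local Open Scope ring_scope.

(* G (+)^0 H is a DDMOG as soon as h labels H injectively by n+1, ..., n+|H|,
   every |wt_h u| is at most n, and for each k the vertices of weight k and -k
   carry equal label sums.  Then v_k receives the first sum and sends out the
   second, so its weight stays 0, while a vertex u of weight w <> 0 is joined
   only to v_|w|, in the direction that cancels w.  For l C4, labeling the
   i-th cycle by n+1+i + c4_layer j * l gives weights +l, +l, -l, -l with
   balanced sums; only l <= n is needed. *)

Section WeightedSum.
Variables (V W : finType) (E : rel V) (F : rel W) (g : V -> nat) (h : W -> nat).

Definition wsum_label (x : V + W) : nat :=
  match x with inl v => g v | inr u => h u end.

Lemma wt_wsum_inl s v :
  wt (wsum E g s F h) wsum_label (inl v) =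
  wt E g v + \sum_(u | wt F h u == (g v)%:Z + s) (h u)%:Z
           - \sum_(u | wt F h u == - ((g v)%:Z + s)) (h u)%:Z.
Proof. by rewrite /wt !big_sumType /= opprD addrACA addrA. Qed.

Lemma wt_wsum_inr s u :
  wt (wsum E g s F h) wsum_label (inr u) =
  wt F h u + \sum_(v | wt F h u == - ((g v)%:Z + s)) (g v)%:Z
           - \sum_(v | wt F h u == (g v)%:Z + s) (g v)%:Z.
Proof. by rewrite {1}/wt !big_sumType /= opprD addrACA addrC addrA. Qed.

Lemma oriented_wsum s :
  oriented E -> oriented F -> (forall v, (g v)%:Z + s != 0) ->
  oriented (wsum E g s F h).
Proof.
move=> oE oF gs [a|a] [b|b] /=; [exact: oE | | | exact: oF].
- by move/eqP->; move: (gs a); lia.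
- by move/eqP->; move: (gs b); lia.
Qed.

End WeightedSum.

Arguments wsum_label {V W} g h x.

Section LabelSums.
Variables (V : finType) (g : V -> nat).
Hypotheses (g_range : forall v, (1 <= g v <= #|V|)%N) (g_inj : injective g).

Lemma label_surj k : (1 <= k <= #|V|)%N -> exists v, g v = k.
Proof.
move=> k_range.
have g_ord v : ((g v).-1 < #|V|)%N by move: (g_range v); lia.
have k_ord : (k.-1 < #|V|)%N by lia.
pose g' v : 'I_#|V| := Ordinal (g_ord v).
have g'_inj : injective g'.
  by move=> a b /(congr1 val) /= e; apply: g_inj; move: (g_range a) (g_range b); lia.
have /codomP [v /(congr1 val) /= e] := inj_card_onto g'_inj (eq_leq (card_ord _)) (Ordinal k_ord).
by exists v; move: (g_range v); lia.
Qed.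

Lemma sum_label_eq (z : int) :
  \sum_(v | (g v)%:Z == z) (g v)%:Z = if (0 < z) && (z <= #|V|%:Z) then z else 0.
Proof.
case: ifP => z_range; last first.
  by rewrite big_pred0 // => v; apply/eqP => e; move: (g_range v) z_range; lia.
have [v gv] := label_surj `|z|%N ltac:(lia).
rewrite (big_pred1 v) => [|w /=]; first by rewrite gv; lia.
by apply/eqP/eqP => [e|->]; [apply: g_inj; lia | rewrite gv; lia].
Qed.

End LabelSums.

Section WeightedSumDDM.
Variables (V W : finType) (E : rel V) (F : rel W) (g : V -> nat) (h : W -> nat).
Hypotheses (gDDM : DDM_labeling E g) (h_inj : injective h)
  (h_range : forall u, (#|V| < h u <= #|V| + #|W|)%N)
  (h_defined : wsum_defined #|V| 0 F h)
  (h_balanced : forall k : nat,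
     \sum_(u | wt F h u == k%:Z) (h u)%:Z = \sum_(u | wt F h u == - k%:Z) (h u)%:Z).

Lemma DDM_labeling_wsum : DDM_labeling (wsum E g 0 F h) (wsum_label g h).
Proof.
have [g_range g_inj g_wt] := gDDM.
split.
- by case=> [v|u] /=; rewrite card_sum; [move: (g_range v) | move: (h_range u)]; lia.
- case=> [a|a] [b|b] /=; first by move/g_inj->.
  + by move: (g_range a) (h_range b); lia.
  + by move: (h_range a) (g_range b); lia.
  + by move/h_inj->.
case=> [v|u].
  by rewrite wt_wsum_inl g_wt !addr0 add0r h_balanced subrr.
have wt_le : `|wt F h u| <= #|V|%:Z by case: (h_defined u) => [|[i [? ->]]]; lia.
rewrite wt_wsum_inr.
rewrite (eq_bigl (fun v => (g v)%:Z == - wt F h u)) => [|v]; last by apply/eqP/eqP; lia.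
rewrite [X in _ - X](eq_bigl (fun v => (g v)%:Z == wt F h u)) => [|v]; last by apply/eqP/eqP; lia.
by rewrite !sum_label_eq //; do 2 case: ifP; lia.
Qed.

End WeightedSumDDM.

Section Cycles.
Variable l : nat.

Lemma lC4_out (i : 'I_l) (j : 'I_4) x : lC4 (i, j) x = (x == (i, ordS j)).
Proof. by case: x => i' j'; rewrite /lC4 xpair_eqE eq_sym -val_eqE. Qed.

Lemma lC4_in (i : 'I_l) (j : 'I_4) x : lC4 x (i, j) = (x == (i, ord_pred j)).
Proof.
case: x => i' j'; rewrite /lC4 xpair_eqE /= (_ : (j'.+1 %% 4)%N = ordS j') //.
by rewrite val_eqE -[j in LHS]ord_predK (inj_eq (@ordS_inj 4)) [j' == _]eq_sym.
Qed.

Lemma oriented_lC4 : oriented (@lC4 l).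
Proof.
case=> i j x; rewrite lC4_out => /eqP->; rewrite lC4_out xpair_eqE eqxx /= -val_eqE.
by case: j => [[|[|[|[|?]]]] ?].
Qed.

Lemma wt_lC4 (h : 'I_l * 'I_4 -> nat) i j :
  wt (@lC4 l) h (i, j) = (h (i, ord_pred j))%:Z - (h (i, ordS j))%:Z.
Proof.
rewrite /wt (big_pred1 (i, ord_pred j)) => [|x]; last exact: lC4_in.
by rewrite (big_pred1 (i, ordS j)) => [|x]; last exact: lC4_out.
Qed.

End Cycles.

Section CycleLabel.
Variables (n l : nat).

(* Layers 1, 2 get weight l and layers 0, 3 weight -l; 1 + 2 = 0 + 3. *)
Definition c4_layer (j : 'I_4) : nat := nth 0%N [:: 1; 2; 0; 3]%N j.

Definition c4_label (u : 'I_l * 'I_4) : nat := (n + 1 + u.1 + c4_layer u.2 * l)%N.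

Lemma c4_layer_inj : injective c4_layer.
Proof. by case=> [[|[|[|[|?]]]] ?] [[|[|[|[|?]]]] ?] //= _; apply: val_inj. Qed.

Lemma c4_label_inj : injective c4_label.
Proof.
case=> i j [i' j']; rewrite /c4_label /= => e.
have /(congr1 (edivn^~ l)) : (c4_layer j * l + i = c4_layer j' * l + i')%N by lia.
by rewrite !edivn_eq // => -[/c4_layer_inj-> /val_inj->].
Qed.

Lemma c4_label_range u : (n < c4_label u <= n + #|{: 'I_l * 'I_4}|)%N.
Proof.
case: u => i j; rewrite card_prod !card_ord /c4_label /=.
have layer_le : (c4_layer j <= 3)%N by case: j => [[|[|[|[|?]]]] ?].
by move: (ltn_ord i) (leq_mul layer_le (leqnn l)); lia.
Qed.

Lemma wt_c4_label i j :
  wt (@lC4 l) c4_label (i, j) = if (j < 2)%N then l%:Z else - l%:Z.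
Proof. by rewrite wt_lC4 /c4_label /c4_layer; case: j => [[|[|[|[|?]]]] ?] /=; lia. Qed.

Lemma c4_label_balanced (k : nat) : (0 < l)%N ->
  \sum_(u | wt (@lC4 l) c4_label u == k%:Z) (c4_label u)%:Z =
  \sum_(u | wt (@lC4 l) c4_label u == - k%:Z) (c4_label u)%:Z.
Proof.
move=> l_gt0; have [->|/eqP k_neq_l] := eqVneq k l; last first.
  by rewrite !big_pred0 // => -[i j]; rewrite wt_c4_label; case: ifP; lia.
pose layer_sum (P : pred 'I_4) :=
  \sum_(i < l) \sum_(j < 4 | P j) (c4_label (i, j))%:Z.
have layer_sumE P : layer_sum P = \sum_(u | P u.2) (c4_label u)%:Z.
  by rewrite /layer_sum pair_big; apply: eq_big => -[].
rewrite (_ : \sum_(u | _) _ = layer_sum (fun j => j < 2)%N); last first.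
  by rewrite layer_sumE; apply: eq_bigl => -[i j]; rewrite wt_c4_label /=; case: ifP; lia.
rewrite (_ : \sum_(u | _) _ = layer_sum (fun j => 2 <= j)%N); last first.
  by rewrite layer_sumE; apply: eq_bigl => -[i j]; rewrite wt_c4_label /=; case: ifP; lia.
apply: eq_bigr => i _.
by rewrite [LHS]big_mkcond [RHS]big_mkcond !big_ord_recl !big_ord0 /c4_label /c4_layer /=; lia.
Qed.

End CycleLabel.

Theorem corollary2 (V : finType) (E : rel V) (g : V -> nat) :
  oriented E -> DDM_labeling E g ->
  forall l : nat, (1 <= l)%N -> (l.*2 <= #|V|)%N ->
  exists h : 'I_l * 'I_4 -> nat,
    (forall u, (0 < h u)%N) /\
    wsum_defined #|V| 0 (@lC4 l) h /\
    DDMOG (wsum E g 0 (@lC4 l) h).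
Proof.
move=> oE gDDM l l_gt0 l2_le; have l_le : (l <= #|V|)%N by lia.
have [g_range _ _] := gDDM.
exists (c4_label #|V| l); split; first by move=> u; rewrite /c4_label; lia.
have h_defined : wsum_defined #|V| 0 (@lC4 l) (c4_label #|V| l).
  by case=> i j; right; exists l; rewrite wt_c4_label; case: ifP; lia.
split=> //; split.
  apply: oriented_wsum => // [|v]; first exact: oriented_lC4.
  by move: (g_range v); lia.
exists (wsum_label g (c4_label #|V| l)); apply: DDM_labeling_wsum => //.
- exact: c4_label_inj.
- exact: c4_label_range.
- by move=> k; apply: c4_label_balanced.
Qed.
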